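(* Let $M\ge 2$. (i) For every prime $p$ and every $k\ge1$, $\Gamma_1(p^k)$ is a normal subgroup of $\Gamma_1(p)$. (ii) If $m$ and $n$ are positive integers with $m\mid_s n$, then $\Gamma_1(n)$ is a normal subgroup of $\Gamma_1(m)$.
   Context: For a prime power $p^k$ ($k>0$), $\Gamma_1(p^k)=\{g=(g_{ij})\in SL_M(\mathbb{Z}): p^{k-1}\mid g_{ij}\text{ for }i<j,\ p^k\mid (g_{ij}-\delta_{ij})\text{ for } i\ge j\}$. For $n=p_1^{e_1}\cdots p_s^{e_s}$, $\Gamma_1(n)=\bigcap_i\Gamma_1(p_i^{e_i})$. We write $m\mid_s n$ (''$n$ is a strong multiple of $m$'') if $m\mid n$ and every prime dividing $n$ also divides $m$. *)

From HB Require Import structures.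
From mathcomp Require Import all_boot all_order all_algebra.
Set Implicit Arguments. Unset Strict Implicit. Unset Printing Implicit Defensive.
Import Order.TTheory GRing.Theory Num.Theory.
Local Open Scope ring_scope.

Definition inSL (M : nat) (g : 'M[int]_M) : Prop := \det g = 1.

Definition Gamma1pp (M p k : nat) (g : 'M[int]_M) : Prop :=
  inSL g /\
  forall i j : 'I_M,
    ((i < j)%N -> ((p ^ k.-1)%N%:Z %| g i j)%Z) /\
    ((j <= i)%N -> ((p ^ k)%N%:Z %| g i j - (i == j)%:R)%Z).

(* Gamma_1(n) = intersection over the prime powers p^e exactly dividing n
   (for n = 1 this is SL_M(Z)). *)
Definition Gamma1 (M n : nat) (g : 'M[int]_M) : Prop :=
  inSL g /\ forall p : nat, prime p -> (p %| n)%N -> Gamma1pp p (logn p n) g.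

Definition strong_dvd (m n : nat) : Prop :=
  (m %| n)%N /\ forall p : nat, prime p -> (p %| n)%N -> (p %| m)%N.

Definition normal_subgroup (M : nat) (H G : 'M[int]_M -> Prop) : Prop :=
  (forall g, H g -> G g) /\
  H 1%:M /\
  (forall a b, H a -> H b -> H (a *m b)) /\
  (forall a, H a -> H (invmx a)) /\
  (forall g h, G g -> H h -> H (g *m h *m invmx g)).

From HB Require Import structures.
From mathcomp Require Import all_boot all_order all_algebra zify.
Import GRing.Theory.
Set Implicit Arguments. Unset Strict Implicit. Unset Printing Implicit Defensive.
Local Open Scope ring_scope.

(* For an integer p and c : nat let L_c be the set of integer matrices X with
   p^(c+1) | X_ij on and below the diagonal and p^c | X_ij above it.  These
   sets are additive groups, decrease in c, and satisfy L_a L_b <= L_(a+b)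
   (filtM).  Hence O = Z 1 + L_0 is a subring of the matrix ring and every
   L_c is a two-sided O-ideal.  By Cayley-Hamilton the inverse of a unit
   matrix is a polynomial in it (invmx_horner), so O is closed under taking
   inverses of units.

   Gamma_1(p^(c+1)) is {g | det g = 1, g - 1 in L_c} (Gamma1pp_Gamma_p).  Its
   elements lie in O, and each subgroup axiom reduces to an identity such as
   g h g^-1 - 1 = g (h - 1) g^-1, whose right side lies in L_c because L_c is
   an O-ideal; this is part (i).  Part (ii) is then formal: Gamma_1(n) is an
   intersection of the groups of part (i), hence normal in the intersection
   of the Gamma_1(p) over the primes p | n, a group containing Gamma_1(m)
   when m |_s n; and Gamma_1(n) <= Gamma_1(m) since m | n. *)

Lemma take_poly1 (R : nzRingType) (q : {poly R}) : take_poly 1 q = (q`_0)%:P.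
Proof. by apply/polyP => i; rewrite coef_take_poly coefC; case: i. Qed.

(* The inverse of an invertible square matrix is a polynomial in it: write
   char_poly A = c0 + X Q; Cayley-Hamilton gives A^-1 = - c0^-1 Q(A). *)
Lemma invmx_horner (R : comUnitRingType) n (A : 'M[R]_n.+1) :
  A \in unitmx -> exists q : {poly R}, invmx A = horner_mx A q.
Proof.
move=> uA; set c := char_poly A.
have c0_unit : c`_0 \is a GRing.unit.
  by rewrite char_poly_det unitrM unitrX ?unitrN ?unitr1 // -unitmxE.
have c_split : c = (c`_0)%:P + drop_poly 1 c * 'X.
  by rewrite -take_poly1 -[X in X = _](poly_take_drop 1) expr1.
have c0_inv : c`_0 *: invmx A = - horner_mx A (drop_poly 1 c).
  have := Cayley_Hamilton A.
  rewrite -/c {1}c_split rmorphD rmorphM /= horner_mx_C horner_mx_X.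
  move=> /(congr1 (mulmx^~ (invmx A))).
  rewrite mul0mx mulmxDl -mulmxE -mulmxA mulmxV // mulmx1 mul_scalar_mx.
  by move=> /eqP; rewrite addr_eq0 => /eqP.
exists (- (c`_0)^-1 *: drop_poly 1 c).
by rewrite horner_mxZ scaleNr -scalerN -c0_inv scalerA mulVr // scale1r.
Qed.

Definition filt (p c n : nat) (X : 'M[int]_n) : Prop :=
  forall i j : 'I_n, ((p ^ (c + (j <= i)))%N%:Z %| X i j)%Z.

Section Filtration.
Variables (p n : nat).
Implicit Types (c : nat) (X Y Z : 'M[int]_n).

Lemma filt0 c : filt p c (0 : 'M[int]_n).
Proof. by move=> i j; rewrite mxE dvdz0. Qed.

Lemma filtD c X Y : filt p c X -> filt p c Y -> filt p c (X + Y).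
Proof. by move=> hX hY i j; rewrite mxE rpredD. Qed.

Lemma filtN c X : filt p c X -> filt p c (- X).
Proof. by move=> hX i j; rewrite mxE rpredN. Qed.

Lemma filtZ c (a : int) X : filt p c X -> filt p c (a *: X).
Proof. by move=> hX i j; rewrite mxE dvdz_mull. Qed.

Lemma filt_mono c c' X : (c <= c')%N -> filt p c' X -> filt p c X.
Proof.
by move=> le_cc' hX i j; apply: dvdz_trans (hX i j); apply: dvdn_exp2l; rewrite leq_add2r.
Qed.

(* L_a L_b <= L_(a+b): in each term X_il Y_lj of (XY)_ij, if j <= i then
   j <= l or l <= i, so one factor carries the extra power of p. *)
Lemma filtM a b X Y : filt p a X -> filt p b Y -> filt p (a + b) (X *m Y).
Proof.
move=> hX hY i j; rewrite mxE; apply: rpred_sum => l _.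
apply: dvdz_trans (dvdz_mul (hX i l) (hY l j)); rewrite -PoszM -expnD.
apply: dvdn_exp2l.
by case: (leqP j i); case: (leqP l i); case: (leqP j l) => /=; lia.
Qed.

(* Y lies in the order O = Z 1 + L_0, i.e. Y is congruent to a scalar
   modulo L_0; O contains every element of Gamma_1(p^k). *)
Definition near_scalar Y := exists a : int, filt p 0 (Y - a%:M).

Lemma near_scalarC a : near_scalar a%:M.
Proof. by exists a; rewrite subrr; apply: filt0. Qed.

Lemma near_scalarD Y Z : near_scalar Y -> near_scalar Z -> near_scalar (Y + Z).
Proof.
move=> [a hY] [b hZ]; exists (a + b).
by rewrite raddfD opprD addrACA; apply: filtD.
Qed.

Lemma near_scalar_filtM c Y X : near_scalar Y -> filt p c X -> filt p c (Y *m X).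
Proof.
move=> [a hY] hX; rewrite -(subrK a%:M Y) mulmxDl mul_scalar_mx.
by apply: filtD (filtZ _ hX); apply: (filtM hY hX).
Qed.

Lemma filt_near_scalarM c X Y : filt p c X -> near_scalar Y -> filt p c (X *m Y).
Proof.
move=> hX [a hY]; rewrite -(subrK a%:M Y) mulmxDr mul_mx_scalar.
apply: filtD (filtZ _ hX); rewrite -[c]addn0; exact: filtM hX hY.
Qed.

Lemma near_scalarM Y Z : near_scalar Y -> near_scalar Z -> near_scalar (Y *m Z).
Proof.
move=> hY [b hZ]; have [a hYa] := hY; exists (a * b).
have -> : Y *m Z - (a * b)%:M = Y *m (Z - b%:M) + b *: (Y - a%:M).
  by rewrite mulmxBr mul_mx_scalar scalerBr scale_scalar_mx mulrC addrA subrK.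
by apply: filtD (filtZ _ hYa); apply: near_scalar_filtM.
Qed.
End Filtration.

Lemma near_scalar_horner p n (Y : 'M[int]_n.+1) (q : {poly int}) :
  near_scalar p Y -> near_scalar p (horner_mx Y q).
Proof.
move=> hY; elim/poly_ind: q => [|q a IH].
  by rewrite rmorph0 -(raddf0 (@scalar_mx int n.+1)); exact: near_scalarC.
rewrite rmorphD rmorphM /= horner_mx_X horner_mx_C -mulmxE.
by apply: near_scalarD; [exact: near_scalarM | exact: near_scalarC].
Qed.

Lemma near_scalar_invmx p n (Y : 'M[int]_n.+1) :
  Y \in unitmx -> near_scalar p Y -> near_scalar p (invmx Y).
Proof. by move=> /invmx_horner[q ->]; apply: near_scalar_horner. Qed.

(* The congruence subgroup {g | det g = 1, g = 1 mod L_c}, which is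
   Gamma_1(p^(c+1)). *)
Definition Gamma_p (p c n : nat) (g : 'M[int]_n) : Prop :=
  \det g = 1 /\ filt p c (g - 1%:M).

Section CongruenceSubgroup.
Variables (p n : nat).
Implicit Types (c : nat) (g h : 'M[int]_n.+1).

Lemma Gamma_p_unit c g : Gamma_p p c g -> g \in unitmx.
Proof. by move=> [dg _]; rewrite unitmxE dg unitr1. Qed.

Lemma Gamma_p_near_scalar c g : Gamma_p p c g -> near_scalar p g.
Proof. by move=> [_ hg]; exists 1; apply: filt_mono hg. Qed.

Lemma Gamma_p_mono c c' g : (c <= c')%N -> Gamma_p p c' g -> Gamma_p p c g.
Proof. by move=> le_cc' [dg hg]; split=> //; apply: filt_mono hg. Qed.

Lemma Gamma_p1 c : Gamma_p p c (1%:M : 'M[int]_n.+1).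
Proof. by split; [rewrite det1 | rewrite subrr; apply: filt0]. Qed.

(* g h - 1 = g (h - 1) + (g - 1). *)
Lemma Gamma_pM c g h : Gamma_p p c g -> Gamma_p p c h -> Gamma_p p c (g *m h).
Proof.
move=> Gg [dh hh]; have [dg hg] := Gg.
split; first by rewrite det_mulmx dg dh mulr1.
have -> : g *m h - 1%:M = g *m (h - 1%:M) + (g - 1%:M).
  by rewrite mulmxBr mulmx1 addrA subrK.
by apply: filtD hg; apply: near_scalar_filtM (Gamma_p_near_scalar Gg) hh.
Qed.

(* h^-1 - 1 = - h^-1 (h - 1), with h^-1 in O. *)
Lemma Gamma_pV c h : Gamma_p p c h -> Gamma_p p c (invmx h).
Proof.
move=> Gh; have [dh hh] := Gh.
split; first by rewrite det_inv dh invr1.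
have -> : invmx h - 1%:M = - (invmx h *m (h - 1%:M)).
  by rewrite mulmxBr mulVmx ?(Gamma_p_unit Gh) // mulmx1 opprB.
apply/filtN/(near_scalar_filtM _ hh).
exact: near_scalar_invmx (Gamma_p_unit Gh) (Gamma_p_near_scalar Gh).
Qed.

(* g h g^-1 - 1 = g (h - 1) g^-1, with g and g^-1 in O. *)
Lemma Gamma_p_conj c g h :
  Gamma_p p 0 g -> Gamma_p p c h -> Gamma_p p c (g *m h *m invmx g).
Proof.
move=> Gg [dh hh]; have ug := Gamma_p_unit Gg; have [dg _] := Gg.
split; first by rewrite !det_mulmx det_inv dg dh invr1 !mulr1.
have -> : g *m h *m invmx g - 1%:M = g *m (h - 1%:M) *m invmx g.
  by rewrite mulmxBr mulmx1 mulmxBl mulmxV.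
apply: filt_near_scalarM; first exact: near_scalar_filtM (Gamma_p_near_scalar Gg) hh.
exact: near_scalar_invmx ug (Gamma_p_near_scalar Gg).
Qed.

Lemma Gamma_p_normal c : normal_subgroup (@Gamma_p p c n.+1) (@Gamma_p p 0 n.+1).
Proof.
split; first by move=> g; apply: Gamma_p_mono.
split; first exact: Gamma_p1.
split; first exact: Gamma_pM.
by split; [exact: Gamma_pV | exact: Gamma_p_conj].
Qed.
End CongruenceSubgroup.

Section NormalSubgroups.
Variable n : nat.
Implicit Types (H G K : 'M[int]_n -> Prop) (P : Prop).

Lemma normal_subgroup_ext H H' G G' :
  (forall g, H g <-> H' g) -> (forall g, G g <-> G' g) ->
  normal_subgroup H G -> normal_subgroup H' G'.
Proof.
move=> eH eG [HG [H1 [HM [HV HJ]]]]; split; last split; last split; last split.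
- by move=> g /eH /HG /eG.
- exact/eH.
- by move=> a b /eH ha /eH hb; apply/eH/HM.
- by move=> a /eH ha; apply/eH/HV.
- by move=> g h /eG hg /eH hh; apply/eH/HJ.
Qed.

Lemma normal_subgroup_sub H G K :
  normal_subgroup H G -> (forall g, H g -> K g) -> (forall g, K g -> G g) ->
  normal_subgroup H K.
Proof.
move=> [_ [H1 [HM [HV HJ]]]] HK KG; do !split=> //.
by move=> g h /KG; apply: HJ.
Qed.

Lemma normal_subgroup_cap H1 G1 H2 G2 :
  normal_subgroup H1 G1 -> normal_subgroup H2 G2 ->
  normal_subgroup (fun g => H1 g /\ H2 g) (fun g => G1 g /\ G2 g).
Proof.
move=> [HG1 [H11 [HM1 [HV1 HJ1]]]] [HG2 [H12 [HM2 [HV2 HJ2]]]].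
split; first by move=> g [/HG1 ? /HG2 ?].
split; first by [].
split; first by move=> a b [? ?] [? ?]; split; [apply: HM1 | apply: HM2].
split; first by move=> a [? ?]; split; [apply: HV1 | apply: HV2].
by move=> g h [? ?] [? ?]; split; [apply: HJ1 | apply: HJ2].
Qed.

Lemma normal_subgroup_forall (I : Type) (H G : I -> 'M[int]_n -> Prop) :
  (forall i, normal_subgroup (H i) (G i)) ->
  normal_subgroup (fun g => forall i, H i g) (fun g => forall i, G i g).
Proof.
move=> nHG; split; first by move=> g hg i; apply: (nHG i).1.
split; first by move=> i; apply: (nHG i).2.1.
split; first by move=> a b ha hb i; apply: (nHG i).2.2.1.
split; first by move=> a ha i; apply: (nHG i).2.2.2.1.
by move=> g h hg hh i; apply: (nHG i).2.2.2.2.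
Qed.

Lemma normal_subgroup_imp P H G :
  (P -> normal_subgroup H G) ->
  normal_subgroup (fun g => P -> H g) (fun g => P -> G g).
Proof.
move=> nHG; split; first by move=> g hg hP; apply: (nHG hP).1; apply: hg.
split; first by move=> /nHG [_ []].
split; first by move=> a b ha hb hP; apply: (nHG hP).2.2.1; [apply: ha | apply: hb].
split; first by move=> a ha hP; apply: (nHG hP).2.2.2.1; apply: ha.
by move=> g h hg hh hP; apply: (nHG hP).2.2.2.2; [apply: hg | apply: hh].
Qed.

Lemma inSL_normal : normal_subgroup (@inSL n) (@inSL n).
Proof.
rewrite /inSL; do !split=> //.
- exact: det1.
- by move=> a b da db; rewrite det_mulmx da db mulr1.
- by move=> a da; rewrite det_inv da invr1.
- by move=> g h dg dh; rewrite !det_mulmx det_inv dg dh invr1 !mulr1.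
Qed.
End NormalSubgroups.

Lemma Gamma1pp_Gamma_p n p k (g : 'M[int]_n) :
  (0 < k)%N -> Gamma1pp p k g <-> Gamma_p p k.-1 g.
Proof.
move=> k_gt0; have neq_ij (i j : 'I_n) : (i < j)%N -> (i == j) = false.
  by move/ltn_eqF.
split=> [[dg hg] | [dg hg]]; split=> // i j; last split=> ij; rewrite ?mxE.
- have [hlt hle] := hg i j; case: (leqP j i) => ji.
    by rewrite addn1 prednK ?hle.
  by rewrite addn0 neq_ij // subr0 hlt.
- by have := hg i j; rewrite !mxE neq_ij // leqNgt ij addn0 subr0.
- by have := hg i j; rewrite !mxE ij addn1 prednK.
Qed.
Arguments Gamma1pp_Gamma_p {n p k g}.

Lemma Gamma1pp_mono n p k k' (g : 'M[int]_n) :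
  (0 < k')%N -> (k' <= k)%N -> Gamma1pp p k g -> Gamma1pp p k' g.
Proof.
move=> k'_gt0 le_k'k /(Gamma1pp_Gamma_p (leq_trans k'_gt0 le_k'k)) [dg hg].
apply/Gamma1pp_Gamma_p => //; split=> //; apply: filt_mono hg.
by rewrite -!subn1 leq_sub2r.
Qed.

(* Part (i), valid for every integer p. *)
Lemma Gamma1pp_normal n p k : (0 < k)%N ->
  normal_subgroup (@Gamma1pp n.+1 p k) (@Gamma1pp n.+1 p 1).
Proof.
move=> k_gt0; apply: normal_subgroup_ext (Gamma_p_normal p n k.-1).
- by move=> g; rewrite Gamma1pp_Gamma_p.
- by move=> g; rewrite Gamma1pp_Gamma_p.
Qed.

Lemma logn_pos p n : prime p -> (0 < n)%N -> (p %| n)%N -> (0 < logn p n)%N.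
Proof. by move=> pp n_gt0 pn; rewrite logn_gt0 mem_primes pp n_gt0 pn. Qed.

Lemma Gamma1_normal n N : (0 < N)%N ->
  normal_subgroup (@Gamma1 n.+1 N)
    (fun g => inSL g /\ forall p, prime p -> (p %| N)%N -> Gamma1pp p 1 g).
Proof.
move=> N_gt0; apply: normal_subgroup_cap (inSL_normal _) _.
apply: (@normal_subgroup_forall _ _
  (fun p g => prime p -> (p %| N)%N -> Gamma1pp p (logn p N) g)) => p.
apply: normal_subgroup_imp => pp; apply: normal_subgroup_imp => pN.
exact/Gamma1pp_normal/logn_pos.
Qed.

Theorem mainTheorem4 (M : nat) (hM : (2 <= M)%N) :
  (forall p k : nat, prime p -> (0 < k)%N ->
     normal_subgroup (@Gamma1pp M p k) (@Gamma1pp M p 1)) /\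
  (forall m n : nat, (0 < m)%N -> (0 < n)%N -> strong_dvd m n ->
     normal_subgroup (@Gamma1 M n) (@Gamma1 M m)).
Proof.
case: M hM => // M _; split=> [p k _ | m n m_gt0 n_gt0 [mn sdiv]].
  exact: Gamma1pp_normal.
apply: normal_subgroup_sub (Gamma1_normal M n_gt0) _ _.
- move=> g [dg hg]; split=> // p pp pm; have pn := dvdn_trans pm mn.
  apply: Gamma1pp_mono (hg p pp pn).
    exact: logn_pos pp m_gt0 pm.
  exact: dvdn_leq_log.
- move=> g [dg hg]; split=> // p pp pn.
  apply: Gamma1pp_mono (hg p pp (sdiv p pp pn)) => //.
  exact: logn_pos pp m_gt0 (sdiv p pp pn).
Qed.
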